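(* For a nonnegative matrix $M\in\mathbb{R}_+^{p\times q}$ the following statements are pairwise equivalent: (i) $M$ is a slack matrix of a polyhedral cone; (ii) $M$ satisfies the RCGC, i.e., $\{x^TM : x\in\mathbb{R}_+^p\}=\{x^TM: x\in\mathbb{R}^p\}\cap\mathbb{R}_+^q$; (iii) $M$ satisfies the CCGC, i.e., $\{Mz: z\in\mathbb{R}_+^q\}=\{Mz: z\in\mathbb{R}^q\}\cap\mathbb{R}_+^p$.
   Context: A matrix $S\in\mathbb{R}^{p\times q}$ is a slack matrix of a polyhedral cone $K\subseteq\mathbb{R}^n$ if there are matrices $A\in\mathbb{R}^{p\times n}$ and $B\in\mathbb{R}^{n\times q}$ with $K=\{x\in\mathbb{R}^n: x^TB\ge 0\}=\{y^TA: y\in\mathbb{R}_+^p\}$ and $S=AB$. A matrix is a slack matrix of a polyhedral cone if it is a slack matrix of some polyhedral cone. *)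

From mathcomp Require Import all_boot all_order all_algebra.
Set Implicit Arguments. Unset Strict Implicit. Unset Printing Implicit Defensive.
Import Order.TTheory GRing.Theory Num.Theory.
Local Open Scope ring_scope.

Definition nonneg_mx (R : realFieldType) (m n : nat) (M : 'M[R]_(m, n)) : Prop :=
  forall i j, 0 <= M i j.

(* S is a slack matrix of the polyhedral cone K = {x : x^T B >= 0} = {y^T A : y >= 0}
   in R^n, for some n, A, B with S = A B. Points of R^n are row vectors. *)
Definition slack_matrix_of_cone (R : realFieldType) (p q : nat) (S : 'M[R]_(p, q)) : Prop :=
  exists (n : nat) (A : 'M[R]_(p, n)) (B : 'M[R]_(n, q)),
    (forall x : 'rV[R]_n,
        nonneg_mx (x *m B) <-> exists y : 'rV[R]_p, nonneg_mx y /\ x = y *m A)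
    /\ S = A *m B.

Definition RCGC (R : realFieldType) (p q : nat) (M : 'M[R]_(p, q)) : Prop :=
  forall v : 'rV[R]_q,
    (exists x : 'rV[R]_p, nonneg_mx x /\ v = x *m M) <->
    ((exists x : 'rV[R]_p, v = x *m M) /\ nonneg_mx v).

Definition CCGC (R : realFieldType) (p q : nat) (M : 'M[R]_(p, q)) : Prop :=
  forall v : 'cV[R]_p,
    (exists z : 'cV[R]_q, nonneg_mx z /\ v = M *m z) <->
    ((exists z : 'cV[R]_q, v = M *m z) /\ nonneg_mx v).

(* Cone generation is a Farkas-type condition: by Farkas' lemma, a vector
   M z in the column space of M lies in the cone spanned by the columns of M
   unless some y with y^T M >= 0 has y^T M z < 0; under the RCGC, y^T M = x^T M
   with x >= 0, so y^T M z = x^T M z >= 0 whenever M z >= 0.  This gives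
   RCGC => CCGC, and transposition gives the converse.  Farkas' lemma itself
   follows by Fourier-Motzkin elimination of one generator at a time.
   A matrix satisfying the RCGC is the slack matrix of the cone
   {x : x^T B >= 0} for any rank factorization M = A B, because x^T B >= 0
   means that x^T B is a row combination of M that is nonnegative. *)

From mathcomp Require Import all_boot all_order all_algebra.
From mathcomp Require Import ring lra.
Set Implicit Arguments. Unset Strict Implicit. Unset Printing Implicit Defensive.
Import Order.TTheory GRing.Theory Num.Theory.
Local Open Scope ring_scope.

Section Farkas.

Variables (R : realFieldType) (p : nat).
Implicit Types (y : 'rV[R]_p) (a b v : 'cV[R]_p) (s : seq 'cV[R]_p).

Definition vdot y v : R := (y *m v) 0 0.

Fixpoint in_cone s b : Prop :=
  if s is a :: s' then exists2 mu : R, 0 <= mu & in_cone s' (b - mu *: a)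
  else b = 0.

Definition separates y s b : Prop :=
  (forall a, a \in s -> 0 <= vdot y a) /\ vdot y b < 0.

Lemma vdotBl y1 y2 r v : vdot (y1 - r *: y2) v = vdot y1 v - r * vdot y2 v.
Proof. by rewrite /vdot mulmxBl -scalemxAl !mxE. Qed.

Lemma vdotBr y r v w : vdot y (v - r *: w) = vdot y v - r * vdot y w.
Proof. by rewrite /vdot mulmxBr -scalemxAr !mxE. Qed.

Lemma separates_nonzero b : b != 0 -> separates (- b^T) [::] b.
Proof.
move=> bn0; split=> //.
have [i bi0] : exists i, b i 0 != 0.
  apply/existsP; apply: contraR bn0; rewrite negb_exists => /forallP b0.
  by apply/eqP/matrixP => i j; rewrite ord1 mxE; apply/eqP/negPn/b0.
rewrite /vdot mulNmx mxE oppr_lt0 mxE (bigD1 i) //= ltr_pwDl //.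
  by rewrite !mxE -expr2 lt0r sqr_ge0 andbT sqrf_eq0.
by apply: sumr_ge0 => k _; rewrite !mxE -expr2 sqr_ge0.
Qed.

(* One step of Fourier-Motzkin elimination of [a]. *)
Lemma in_cone_eliminate a (k : 'cV[R]_p -> R) s b :
    {in s, forall x, k x <= 0} ->
  in_cone [seq x - k x *: a | x <- s] b -> exists2 t, t <= 0 & in_cone s (b + t *: a).
Proof.
elim: s b => [|x s IHs] b /= k_le0.
  by move=> ->; exists 0; rewrite ?scale0r ?addr0.
case=> mu mu_ge0 /IHs [|t t_le0 cone_t].
  by move=> y sy; apply: k_le0; rewrite inE sy orbT.
have kx_le0 : k x <= 0 by apply: k_le0; rewrite inE eqxx.
exists (t + mu * k x); first by have := mulr_ge0_le0 mu_ge0 kx_le0; lra.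
exists mu => //.
suff -> : b + (t + mu * k x) *: a - mu *: x = b - mu *: (x - k x *: a) + t *: a by [].
by apply/matrixP => i j; rewrite !mxE; ring.
Qed.

Section EliminationStep.

Variables (a b : 'cV[R]_p) (s : seq 'cV[R]_p) (y : 'rV[R]_p).
Hypotheses (y_sep : separates y s b) (ya_lt0 : vdot y a < 0).

Let k x := vdot y x / vdot y a.
Let s' := [seq x - k x *: a | x <- s].

Lemma in_cone_cons_eliminated : in_cone s' (b - k b *: a) -> in_cone (a :: s) b.
Proof.
have [y_s yb_lt0] := y_sep.
have k_le0 : {in s, forall x, k x <= 0}.
  by move=> x sx; rewrite /k mulr_ge0_le0 ?y_s // invr_le0 ltW.
have kb_gt0 : 0 < k b by rewrite /k -mulrNN -invrN divr_gt0 // oppr_gt0.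
case/(in_cone_eliminate k_le0) => t t_le0 cone_t.
exists (k b - t); first lra.
suff -> : b - (k b - t) *: a = b - k b *: a + t *: a by [].
by apply/matrixP => i j; rewrite !mxE; ring.
Qed.

Lemma separates_cons_eliminated y' :
  separates y' s' (b - k b *: a) ->
  separates (y' - (vdot y' a / vdot y a) *: y) (a :: s) b.
Proof.
have ya_neq0 : vdot y a != 0 by rewrite ltr0_neq0.
(* The correction by [y] makes the lifted functional vanish on [a]. *)
have lift v : vdot (y' - (vdot y' a / vdot y a) *: y) v =
              vdot y' (v - k v *: a).
  by rewrite vdotBl vdotBr /k; field.
case=> y'_s' y'b_lt0; split; last by rewrite lift.
move=> x; rewrite inE => /predU1P [->|sx].
  by rewrite vdotBl mulfVK ?subrr.
by rewrite lift; apply/y'_s'/map_f.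
Qed.

End EliminationStep.

Lemma farkas s b : in_cone s b \/ exists y, separates y s b.
Proof.
move sizes: (size s) => n; elim: n s sizes b => [|n IHn] [|a s] //= sizes b.
  by have [->|bn0] := eqVneq b 0; [left | right; exists (- b^T); apply: separates_nonzero].
case: sizes => sizes.
have [cone_b|[y y_sep]] := IHn s sizes b.
  by left; exists 0; rewrite ?scale0r ?subr0.
have [ya_ge0|ya_lt0] := lerP 0 (vdot y a).
  right; exists y; case: y_sep => y_s yb_lt0; split=> // x.
  by rewrite inE => /predU1P [->|]; last exact: y_s.
pose k x := vdot y x / vdot y a.
have [|cone_b'|[y' y'_sep]] := IHn [seq x - k x *: a | x <- s] _ (b - k b *: a).
- by rewrite size_map.
- by left; apply: in_cone_cons_eliminated cone_b'.
- by right; eexists; apply: separates_cons_eliminated y'_sep.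
Qed.

End Farkas.

Lemma nonneg_mulmx (R : realFieldType) m n k (A : 'M[R]_(m, n)) (B : 'M[R]_(n, k)) :
  nonneg_mx A -> nonneg_mx B -> nonneg_mx (A *m B).
Proof. by move=> A_ge0 B_ge0 i j; rewrite mxE sumr_ge0 // => l _; rewrite mulr_ge0. Qed.

Lemma nonneg_trmx (R : realFieldType) m n (A : 'M[R]_(m, n)) :
  nonneg_mx A^T <-> nonneg_mx A.
Proof. by split=> A_ge0 i j; [have := A_ge0 j i | ]; rewrite ?mxE. Qed.

Section ConeGeneratingConditions.

Variables (R : realFieldType) (p q : nat) (M : 'M[R]_(p, q)).

Lemma in_cone_cols (r : seq 'I_q) b :
  in_cone [seq col j M | j <- r] b -> exists z, nonneg_mx z /\ b = M *m z.
Proof.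
elim: r b => [|j r IHr] b /=.
  by move=> ->; exists 0; split=> [i k|]; rewrite ?mxE ?mulmx0.
case=> mu mu_ge0 /IHr [z [z_ge0 bE]].
exists (z + mu *: delta_mx j 0); split.
  by move=> i k; rewrite !mxE addr_ge0 ?mulr_ge0 ?ler0n.
by rewrite mulmxDr -scalemxAr -colE -bE subrK.
Qed.

Lemma RCGC_CCGC : nonneg_mx M -> RCGC M -> CCGC M.
Proof.
move=> M_ge0 rcgc v; split=> [[z [z_ge0 ->]]|[[z vE] v_ge0]].
  by split; [exists z | apply: nonneg_mulmx].
have [|[y [y_cols yv_lt0]]] := farkas [seq col j M | j <- enum 'I_q] v.
  exact: in_cone_cols.
have yM_ge0 : nonneg_mx (y *m M).
  move=> i j; rewrite ord1.
  have := y_cols _ (map_f (fun k => col k M) (mem_enum _ j)).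
  by rewrite /vdot colE mulmxA -colE mxE.
have [x [x_ge0 yM_xM]] := (proj2 (rcgc (y *m M))) (conj (ex_intro _ y erefl) yM_ge0).
suff : 0 <= vdot y v by lra.
by rewrite /vdot vE mulmxA yM_xM -mulmxA -vE; apply: nonneg_mulmx.
Qed.

Lemma CCGC_RCGC_trmx : CCGC M -> RCGC M^T.
Proof.
have trE (x : 'rV[R]_q) v : v = x *m M^T -> v^T = M *m x^T.
  by move->; rewrite trmx_mul trmxK.
move=> ccgc v; have [toC fromC] := ccgc v^T; split.
  case=> x [x_ge0 /trE vE]; split; first by exists x; rewrite -[v]trmxK vE trmx_mul trmxK.
  by apply/nonneg_trmx; case: toC; [exists x^T; split=> // i j; rewrite mxE|].
case=> [[x /trE vE] v_ge0].
have [|z [z_ge0 Mz]] := fromC; first by split; [exists x^T | apply/nonneg_trmx].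
by exists z^T; split; [exact/nonneg_trmx | rewrite -[v]trmxK Mz trmx_mul].
Qed.

End ConeGeneratingConditions.

Lemma CCGC_RCGC (R : realFieldType) p q (M : 'M[R]_(p, q)) :
  nonneg_mx M -> CCGC M -> RCGC M.
Proof.
move=> M_ge0 ccgc; rewrite -[M]trmxK; apply: CCGC_RCGC_trmx.
by apply: RCGC_CCGC (CCGC_RCGC_trmx ccgc); apply/nonneg_trmx.
Qed.

Lemma slack_matrix_of_coneP (R : realFieldType) p q (M : 'M[R]_(p, q)) :
  slack_matrix_of_cone M <-> RCGC M.
Proof.
split=> [[n [A [B [coneE ->]]]] v|rcgc].
  split=> [[y [y_ge0 ->]]|[[x ->] xAB_ge0]].
    split; first by exists y.
    by rewrite mulmxA; apply/coneE; exists y.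
  rewrite mulmxA in xAB_ge0; have [y [y_ge0 xAE]] := proj1 (coneE _) xAB_ge0.
  by exists y; rewrite mulmxA xAE mulmxA.
exists (\rank M), (col_base M), (row_base M); split; last by rewrite mulmx_base.
have [C CA1] := row_fullP (col_base_full M).
have [D BD1] := row_freeP (row_base_free M).
have yM y : y *m M = y *m col_base M *m row_base M by rewrite -mulmxA mulmx_base.
have xCM x : x *m C *m M = x *m row_base M by rewrite yM -(mulmxA x) CA1 mulmx1.
move=> x; split=> [xB_ge0|[y [y_ge0 ->]]]; last first.
  by rewrite -mulmxA mulmx_base; apply: (proj2 (proj1 (rcgc _) _)); exists y.
have [|y [y_ge0 xCM_yM]] := proj2 (rcgc (x *m C *m M)).
  by split; [exists (x *m C) | rewrite xCM].
exists y; split=> //.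
by rewrite -[x]mulmx1 -BD1 mulmxA -xCM xCM_yM yM -mulmxA BD1 mulmx1.
Qed.

Theorem corollary2p4 (R : realFieldType) (p q : nat) (M : 'M[R]_(p, q)) :
  nonneg_mx M ->
  (slack_matrix_of_cone M <-> RCGC M) /\ (RCGC M <-> CCGC M) /\
  (slack_matrix_of_cone M <-> CCGC M).
Proof.
move=> M_ge0.
have RCGC_CCGCE : RCGC M <-> CCGC M by split; [apply: RCGC_CCGC | apply: CCGC_RCGC].
by split; [|split]; rewrite // (slack_matrix_of_coneP M).
Qed.
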